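(* Let $f_i:\mathbb{R}^d\to\mathbb{R}$ be twice differentiable, let $\lambda\in[0,1)$, $w^t\in\mathbb{R}^d$, $s^t\ge0$, and let $$q_{i,t}(w)=f_i(w^t)+\langle\nabla f_i(w^t),w-w^t\rangle+\tfrac12\langle\nabla^2 f_i(w^t)(w-w^t),w-w^t\rangle .$$ Define $$(w^{t+1/2},s^{t+1/2})=\arg\min_{s\ge0,\,w\in\mathbb{R}^d}\ \tfrac{1-\lambda}{2}\big(\|w-w^t\|^2+(s-s^t)^2\big)+\tfrac{\lambda}{2}s^2\ \text{ s.t. }\ q_{i,t}(w^t)+\langle\nabla q_{i,t}(w^t),w-w^t\rangle\le s,$$ $$(w^{t+1},s^{t+1})=\arg\min_{s\ge0,\,w\in\mathbb{R}^d}\ \tfrac{1-\lambda}{2}\big(\|w-w^{t+1/2}\|^2+(s-s^{t+1/2})^2\big)+\tfrac{\lambda}{2}s^2\ \text{ s.t. }\ q_{i,t}(w^{t+1/2})+\langle\nabla q_{i,t}(w^{t+1/2}),w-w^{t+1/2}\rangle\le s.$$ Then $$w^{t+1}=w^t-(\Gamma_1+\Gamma_2)\nabla f_i(w^t)+\Gamma_2\Gamma_1\nabla^2 f_i(w^t)\nabla f_i(w^t),\qquad s^{t+1}=(1-\lambda)\big((1-\lambda)(s^t+\Gamma_1)+\Gamma_2\big),$$ where $$\Gamma_1=\frac{(f_i(w^t)-(1-\lambda)s^t)_+}{1-\lambda+\|\nabla f_i(w^t)\|^2},$$ $$\Gamma_2=\left(\frac{f_i(w^t)-\Gamma_1\|\nabla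 f_i(w^t)\|^2-(1-\lambda)^2(s^t+\Gamma_1)+\tfrac12\Gamma_1^2\langle\nabla^2 f_i(w^t)\nabla f_i(w^t),\nabla f_i(w^t)\rangle}{1-\lambda+\|\nabla f_i(w^t)-\Gamma_1\nabla^2 f_i(w^t)\nabla f_i(w^t)\|^2}\right)_+,$$ and $(x)_+=x$ if $x\ge0$ and $(x)_+=0$ otherwise.
   Context: This two-step update is called SP2L2$^+$; it approximately solves the L2-slack formulation $\min_{s,w}\frac12 s^2$ s.t. $f_i(w)\le s$ for all $i$. *)

From HB Require Import structures.
From mathcomp Require Import all_boot all_order all_algebra.
From mathcomp Require Import all_classical all_reals all_analysis.
Set Implicit Arguments. Unset Strict Implicit. Unset Printing Implicit Defensive.
Import Order.TTheory GRing.Theory Num.Theory.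
Import numFieldNormedType.Exports.
Local Open Scope ring_scope.

Section Defs.
Context {R : realType} {d : nat}.

(* Euclidean inner product <u, v> on R^d (NB: the library's norm on matrices
   is the sup norm, so the Euclidean norm is expressed via dot u u). *)
Definition dot (u v : 'rV[R]_d) : R := \sum_(i < d) u 0 i * v 0 i.

Definition grad (f : 'rV[R]_d -> R) (w : 'rV[R]_d) : 'rV[R]_d :=
  \row_j ('d f w (delta_mx 0 j)).

Definition hess (f : 'rV[R]_d -> R) (w : 'rV[R]_d) : 'M[R]_d :=
  \matrix_(i, j) (('d (grad f) w (delta_mx 0 j)) 0 i).

Definition mulMv (H : 'M[R]_d) (v : 'rV[R]_d) : 'rV[R]_d :=
  \row_i (\sum_(j < d) H i j * v 0 j).

Definition twice_differentiable (f : 'rV[R]_d -> R) : Prop :=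
  forall w, differentiable f w /\ differentiable (grad f) w.

Definition qmodel (f : 'rV[R]_d -> R) (wt : 'rV[R]_d) (w : 'rV[R]_d) : R :=
  f wt + dot (grad f wt) (w - wt)
  + 2^-1 * dot (mulMv (hess f wt) (w - wt)) (w - wt).

Definition pospart (x : R) : R := Num.max x 0.

Definition sp_obj (lam : R) (wc : 'rV[R]_d) (sc : R) (w : 'rV[R]_d) (s : R) : R :=
  (1 - lam) / 2 * (dot (w - wc) (w - wc) + (s - sc) ^+ 2) + lam / 2 * s ^+ 2.

Definition sp_feas (q : 'rV[R]_d -> R) (w0 : 'rV[R]_d) (w : 'rV[R]_d) (s : R) : Prop :=
  0 <= s /\ q w0 + dot (grad q w0) (w - w0) <= s.

Definition sp_argmin (lam : R) (q : 'rV[R]_d -> R) (wc : 'rV[R]_d) (sc : R)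
    (w : 'rV[R]_d) (s : R) : Prop :=
  sp_feas q wc w s /\
  forall w' s', sp_feas q wc w' s' -> sp_obj lam wc sc w s <= sp_obj lam wc sc w' s'.

End Defs.

(* Each sub-step minimizes a strongly convex quadratic over the half-space
   [c + <a, w - wc> <= s], [s >= 0], where [c] and [a] are the value and the
   gradient of the model at the centre [wc].  Completing the square around
   [(wc - G a, (1 - lam) (sc + G))] with
   [G = (c - (1 - lam) sc)_+ / (1 - lam + |a|^2)] shows that this point is the
   unique minimizer: by complementary slackness the cross term is nonnegative
   on the feasible set.  For the Taylor model [q] of [f] at [wt] the gradient is
   [grad f wt + hess f wt (w - wt)]; this needs the symmetry of the Hessian,
   which holds for every twice differentiable [f]: the second difference
   [f (x + t e_j + t e_i) - f (x + t e_i) - f (x + t e_j) + f x] is symmetric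
   in [i], [j] and, by the mean value theorem and the differentiability of
   [grad f] at [x], equals [t^2 hess f x i j + o(t^2)].  Substituting the
   first step into the second gives the closed forms. *)

From HB Require Import structures.
From mathcomp Require Import all_boot all_order all_algebra.
From mathcomp Require Import all_classical all_reals all_analysis.
From mathcomp Require Import ring lra.
Import Order.TTheory GRing.Theory Num.Theory.
Import numFieldNormedType.Exports.
Local Open Scope ring_scope.

Section DotProduct.
Context {R : realType} {d : nat}.
Implicit Types (u v w : 'rV[R]_d) (H : 'M[R]_d).

Lemma dotC u v : dot u v = dot v u.
Proof. by apply: eq_bigr => i _; rewrite mulrC. Qed.

Lemma dotDl u v w : dot (u + v) w = dot u w + dot v w.
Proof. by rewrite /dot -big_split; apply: eq_bigr => i _; rewrite mxE mulrDl. Qed.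

Lemma dotZl (a : R) u v : dot (a *: u) v = a * dot u v.
Proof. by rewrite /dot mulr_sumr; apply: eq_bigr => i _; rewrite mxE mulrA. Qed.

Lemma dotNl u v : dot (- u) v = - dot u v.
Proof. by rewrite -scaleN1r dotZl mulN1r. Qed.

Lemma dotBl u v w : dot (u - v) w = dot u w - dot v w.
Proof. by rewrite dotDl dotNl. Qed.

Lemma dotDr u v w : dot u (v + w) = dot u v + dot u w.
Proof. by rewrite dotC dotDl !(dotC u). Qed.

Lemma dotZr (a : R) u v : dot u (a *: v) = a * dot u v.
Proof. by rewrite dotC dotZl dotC. Qed.

Lemma dotNr u v : dot u (- v) = - dot u v.
Proof. by rewrite dotC dotNl dotC. Qed.

Lemma dotBr u v w : dot u (v - w) = dot u v - dot u w.
Proof. by rewrite dotDr dotNr. Qed.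

Lemma dot0r u : dot u 0 = 0.
Proof. by rewrite /dot big1 // => i _; rewrite mxE mulr0. Qed.

Lemma dot_ge0 u : 0 <= dot u u.
Proof. by apply: sumr_ge0 => i _; rewrite -expr2 sqr_ge0. Qed.

Lemma dot_eq0 u : (dot u u == 0) = (u == 0).
Proof.
rewrite psumr_eq0 => [|i _]; last by rewrite -expr2 sqr_ge0.
apply/allP/eqP => [u0|-> i _ /=]; last by rewrite mxE mulr0.
apply/rowP => j; rewrite mxE.
by have /= := u0 j (mem_index_enum j); rewrite mulf_eq0 orbb => /eqP.
Qed.

Lemma dot_delta u j : dot u (delta_mx 0 j) = u 0 j.
Proof.
rewrite /dot (bigD1 j) //= big1 ?addr0 => [|k /negbTE kj]; first by rewrite mxE !eqxx mulr1.
by rewrite mxE kj andbF mulr0.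
Qed.

Lemma mulMvD H u v : mulMv H (u + v) = mulMv H u + mulMv H v.
Proof. by apply/rowP => i; rewrite !mxE -big_split; apply: eq_bigr => k _; rewrite mxE mulrDr. Qed.

Lemma mulMvZ H (a : R) u : mulMv H (a *: u) = a *: mulMv H u.
Proof. by apply/rowP => i; rewrite !mxE mulr_sumr; apply: eq_bigr => k _; rewrite mxE mulrCA. Qed.

Lemma mulMvN H u : mulMv H (- u) = - mulMv H u.
Proof. by rewrite -scaleN1r mulMvZ scaleN1r. Qed.

Lemma mulMv0 H : mulMv H 0 = 0.
Proof. by apply/rowP => i; rewrite !mxE big1 // => k _; rewrite mxE mulr0. Qed.

Lemma dot_mulMv_tr H u v : dot (mulMv H u) v = dot u (mulMv H^T v).
Proof.
rewrite /dot; under eq_bigr do rewrite mxE mulr_suml.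
rewrite exchange_big; apply: eq_bigr => j _; rewrite mxE mulr_sumr.
by apply: eq_bigr => i _; rewrite mxE mulrCA mulrA.
Qed.

End DotProduct.

Section PositivePart.
Context {R : realType}.
Implicit Types x y : R.

Lemma pospart_ge x : x <= pospart x.
Proof. by rewrite /pospart le_max lexx. Qed.

Lemma pospart_ge0 x : 0 <= pospart x.
Proof. by rewrite /pospart le_max lexx orbT. Qed.

Lemma pospart_slack x : pospart x * (pospart x - x) = 0.
Proof. by rewrite /pospart; case: leP => _; rewrite ?mul0r ?subrr ?mulr0. Qed.

Lemma pospart_div x y : 0 < y -> pospart x / y = pospart (x / y).
Proof.
move=> y_gt0; rewrite /pospart; case: (leP x 0) => [x_le0|x_gt0].
  by rewrite mul0r max_r // pmulr_lle0 ?invr_gt0.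
by rewrite max_l // ltW // divr_gt0.
Qed.

End PositivePart.

Section SubProblem.
Context {R : realType} {d : nat}.

Definition sp_step (lam c : R) (a : 'rV[R]_d) (sc : R) : R :=
  pospart (c - (1 - lam) * sc) / (1 - lam + dot a a).

Lemma sp_den_gt0 (lam : R) (a : 'rV[R]_d) : lam < 1 -> 0 < 1 - lam + dot a a.
Proof. by move=> lam_lt1; rewrite ltr_wpDr ?dot_ge0 // subr_gt0. Qed.

Variables (lam c sc : R) (a wc : 'rV[R]_d).
Hypotheses (lam_lt1 : lam < 1) (sc_ge0 : 0 <= sc).

Local Notation G := (sp_step lam c a sc).
Local Notation ws := (wc - G *: a).
Local Notation ss := ((1 - lam) * (sc + G)).

Let ws_subc : ws - wc = - (G *: a).
Proof. by rewrite addrAC subrr add0r. Qed.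

Lemma sp_step_ge0 : 0 <= G.
Proof. by rewrite divr_ge0 ?pospart_ge0 // ltW // sp_den_gt0. Qed.

Lemma sp_step_feas : 0 <= ss /\ c + dot a (ws - wc) <= ss.
Proof.
have lam_le1 : lam <= 1 by exact: ltW.
split; first by rewrite mulr_ge0 ?subr_ge0 ?addr_ge0 ?sp_step_ge0.
have : c - (1 - lam) * sc <= G * (1 - lam + dot a a).
  by rewrite /sp_step divfK ?pospart_ge // gt_eqF // sp_den_gt0.
rewrite ws_subc dotNr dotZr -subr_ge0 => G_ge; rewrite -subr_ge0.
suff -> : ss - (c - G * dot a a) = G * (1 - lam + dot a a) - (c - (1 - lam) * sc) by [].
ring.
Qed.

Lemma sp_step_slack : G * (c + dot a (ws - wc) - ss) = 0.
Proof.
set X := c - (1 - lam) * sc; set D := 1 - lam + dot a a.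
have D_neq0 : D != 0 by rewrite gt_eqF // sp_den_gt0.
rewrite ws_subc dotNr dotZr.
have -> : c - G * dot a a - ss = X - G * D by rewrite /X /D; ring.
by rewrite /sp_step -/X -/D divfK // mulrAC -opprB mulrN pospart_slack oppr0 mul0r.
Qed.

Lemma sp_obj_expand w s :
  sp_obj lam wc sc w s = sp_obj lam wc sc ws ss
    + ((1 - lam) * dot (w - ws) (w - ws) + (s - ss) ^+ 2) / 2
    + (1 - lam) * G * (s - ss - dot a (w - ws)).
Proof.
rewrite /sp_obj; set v := w - ws.
have -> : w - wc = v - G *: a by rewrite -ws_subc /v addrA subrK.
clearbody v; rewrite ws_subc !(dotBl, dotBr, dotNl, dotNr, dotZl, dotZr) (dotC v a).
by field.
Qed.

End SubProblem.

Lemma sp_argmin_eq {R : realType} {d : nat} {lam : R} {q : 'rV[R]_d -> R} {wc sc w s} :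
  lam < 1 -> 0 <= sc -> sp_argmin lam q wc sc w s ->
  let G := sp_step lam (q wc) (grad q wc) sc in
  w = wc - G *: grad q wc /\ s = (1 - lam) * (sc + G).
Proof.
move=> lam_lt1 sc_ge0 [[_ w_feas] w_min] G.
set a := grad q wc in w_feas w_min G *; set ws := wc - G *: a; set ss := (1 - lam) * (sc + G).
have [ss_ge0 ws_feas] := sp_step_feas lam (q wc) sc a wc lam_lt1 sc_ge0.
have := w_min ws ss (conj ss_ge0 ws_feas).
rewrite (sp_obj_expand lam (q wc) sc a) -/G -/ws -/ss.
have slack_ge0 : 0 <= G * (s - ss - dot a (w - ws)).
  have split_w : dot a (w - wc) = dot a (w - ws) + dot a (ws - wc).
    by rewrite -dotDr addrA subrK.
  have -> : G * (s - ss - dot a (w - ws))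
      = G * (s - (q wc + dot a (w - wc))) + G * (q wc + dot a (ws - wc) - ss).
    by rewrite split_w; ring.
  rewrite (sp_step_slack lam (q wc) sc a wc lam_lt1) addr0.
  by rewrite mulr_ge0 ?subr_ge0 // (sp_step_ge0 _ _ _ _ lam_lt1).
set N := dot (w - ws) (w - ws) => obj_le.
have N_ge0 : 0 <= N := dot_ge0 (w - ws).
have sq_ge0 : 0 <= (s - ss) ^+ 2 := sqr_ge0 _.
have lam_gt : 0 < 1 - lam by rewrite subr_gt0.
have dev_le0 : (1 - lam) * N + (s - ss) ^+ 2 <= 0.
  by have := mulr_ge0 (ltW lam_gt) slack_ge0; lra.
split.
  apply/eqP; rewrite -subr_eq0 -dot_eq0 -/N eq_le N_ge0 andbT.
  by rewrite -(pmulr_rle0 _ lam_gt); lra.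
have lamN_ge0 := mulr_ge0 (ltW lam_gt) N_ge0.
by apply/eqP; rewrite -subr_eq0 -sqrf_eq0 eq_le sq_ge0 andbT; lra.
Qed.

Section QuadraticGradient.
Context {R : realType} {d : nat}.

Lemma differentiable_sum_fun {V : normedModType R} n (F : 'I_n -> V -> R) x :
  (forall i, differentiable (F i) x) -> differentiable (fun y => \sum_(i < n) F i y) x.
Proof.
have -> : (fun y => \sum_(i < n) F i y) = \sum_(i < n) F i by apply/funext => y; rewrite fct_sumE.
exact: differentiable_sum.
Qed.

Lemma differentiable_dot {V : normedModType R} (u v : V -> 'rV[R]_d) x :
  (forall i, differentiable (fun y => u y 0 i) x) ->
  (forall i, differentiable (fun y => v y 0 i) x) ->
  differentiable (fun y => dot (u y) (v y)) x.
Proof. by move=> du dv; apply: differentiable_sum_fun => i; apply: differentiableM. Qed.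

Lemma diff_line_quadratic {V : normedModType R} (phi : V -> R) w v (A B : R) :
  differentiable phi w ->
  (forall h, phi (h *: v + w) = phi w + h * A + h ^+ 2 * B) -> 'd phi w v = A.
Proof.
move=> dphi phi_line; rewrite -deriveE //; apply: cvg_lim => //.
apply: (@cvg_trans _ (((fun h : R => A + h * B) @ 0^')%classic)).
  apply: near_eq_cvg; near=> h.
  have h_neq0 : h != 0 by near: h; exact: nbhs_dnbhs_neq.
  by rewrite /= phi_line [_ *: _]/(GRing.scale _ _) /=; field.
apply: cvg_within_filter.
suff : ((fun h : R => A + h * B) @ (0 : R) --> A + 0 * B)%classic by rewrite mul0r addr0.
by apply: cvgD; [exact: cvg_cst | apply: cvgMl; exact: cvg_id].
Unshelve. all: by end_near.
Qed.

Variables (c : R) (g wt : 'rV[R]_d) (H : 'M[R]_d).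
Local Notation q := (fun w => c + dot g (w - wt) + 2^-1 * dot (mulMv H (w - wt)) (w - wt)).

Lemma differentiable_quadratic w : differentiable q w.
Proof.
have dsub i : differentiable (fun w : 'rV[R]_d => (w - wt) 0 i) w.
  have -> : (fun w : 'rV[R]_d => (w - wt) 0 i) = (fun w => w 0 i - wt 0 i).
    by apply/funext => y; rewrite !mxE.
  by apply: differentiableB; [exact: differentiable_coord|].
have dmul i : differentiable (fun w => mulMv H (w - wt) 0 i) w.
  have -> : (fun w => mulMv H (w - wt) 0 i) = (fun w => \sum_(j < d) H i j * (w - wt) 0 j).
    by apply/funext => y; rewrite mxE.
  by apply: differentiable_sum_fun => j; apply: differentiableM.
apply: differentiableD; [apply: differentiableD => //|apply: differentiableM => //].
  exact: differentiable_dot.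
exact: differentiable_dot.
Qed.

Lemma grad_quadratic w : H^T = H -> grad q w = g + mulMv H (w - wt).
Proof.
move=> H_sym; apply/rowP => j; rewrite !mxE.
set e := delta_mx 0 j; set u := w - wt.
have q_line h : q (h *: e + w) = q w
    + h * (dot g e + 2^-1 * (dot (mulMv H e) u + dot (mulMv H u) e))
    + h ^+ 2 * (2^-1 * dot (mulMv H e) e).
  have -> : h *: e + w - wt = h *: e + u by rewrite /u addrA.
  by rewrite !(mulMvD, mulMvZ, dotDl, dotDr, dotZl, dotZr); ring.
rewrite (diff_line_quadratic _ _ _ _ _ (differentiable_quadratic w) q_line).
rewrite dot_mulMv_tr H_sym (dotC e) !dot_delta mxE.
by field.
Qed.

End QuadraticGradient.

Section MatrixNorm.
Context {R : realType} {m n : nat}.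

Lemma mx_entry_le_norm (M : 'M[R]_(m, n)) i j : `|M i j| <= `|M|.
Proof.
rewrite [X in _ <= X]/Num.norm /= mx_normrE.
exact: (le_bigmax _ (fun ij : 'I_m * 'I_n => `|M ij.1 ij.2|) (i, j)).
Qed.

Lemma norm_delta_mx_le1 i j : `|delta_mx i j : 'M[R]_(m, n)| <= 1.
Proof.
rewrite [X in X <= _]/Num.norm /= mx_normrE; apply: bigmax_le => // -[k l] _.
by rewrite mxE normr_nat lern1 leq_b1.
Qed.

Lemma normZ_delta_mx_le (s : R) i j : 0 <= s -> `|s *: (delta_mx i j : 'M[R]_(m, n))| <= s.
Proof. by move=> s_ge0; rewrite normrZ ger0_norm // ler_piMr // norm_delta_mx_le1. Qed.

End MatrixNorm.

Section HessianSymmetry.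
Context {R : realType} {d : nat} (f : 'rV[R]_d -> R).
Hypotheses (f_diff : forall w, differentiable f w)
  (grad_diff : forall w, differentiable (grad f) w).
Local Notation e_ := (@delta_mx R 1 d 0).

Lemma is_derive_line (y v : 'rV[R]_d) (s : R) :
  is_derive s 1 (fun t : R => f (y + t *: v)) ('d f (y + s *: v) v).
Proof.
have line_shift : (fun h : R => h^-1 *: (f (y + (h *: 1 + s) *: v) - f (y + s *: v))) =
    (fun h : R => h^-1 *: (f (h *: v + (y + s *: v)) - f (y + s *: v))).
  by apply/funext => h; rewrite [h *: 1]mulr1 scalerDl addrCA addrA.
apply: DeriveDef; first by rewrite /derivable line_shift; exact: diff_derivable.
by rewrite /derive line_shift -deriveE.
Qed.

Definition second_difference (x a b : 'rV[R]_d) (t : R) : R :=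
  f (x + t *: b + t *: a) - f (x + t *: a) - f (x + t *: b) + f x.

Lemma second_differenceC x a b : second_difference x a b = second_difference x b a.
Proof. by apply/funext => t; rewrite /second_difference (addrAC x) (addrAC (f _)). Qed.

Lemma second_difference_mvt x a b t : 0 <= t ->
  exists2 c, c \in `[0, t] &
    second_difference x a b t = t * ('d f (x + t *: b + c *: a) a - 'd f (x + c *: a) a).
Proof.
move=> t_ge0.
pose phi s := f (x + t *: b + s *: a) - f (x + s *: a).
pose dphi s := 'd f (x + t *: b + s *: a) a - 'd f (x + s *: a) a.
have phi_der (s : R) : is_derive s 1 phi (dphi s).
  exact: is_deriveB (is_derive_line (x + t *: b) a s) (is_derive_line x a s).
have [|c c_in phi_incr] := MVT_segment t_ge0 (fun s _ => phi_der s).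
  by apply: derivable_within_continuous => s _; exact: ex_derive.
exists c => //; have -> : t * dphi c = dphi c * (t - 0) by rewrite subr0 mulrC.
rewrite -phi_incr /phi /second_difference !scale0r !addr0; ring.
Qed.

Definition grad_remainder (x u : 'rV[R]_d) : 'rV[R]_d :=
  grad f (x + u) - grad f x - 'd (grad f) x u.

Lemma grad_remainder_small x eps : 0 < eps ->
  exists2 del : R, 0 < del & forall u, `|u| < del -> forall i,
    `|grad_remainder x u 0 i| <= eps * `|u|.
Proof.
move=> eps_gt0; have /eqaddoP/(_ eps eps_gt0) := diff_locally (grad_diff x).
move=> /nbhs_norm0P[del /= del_gt0 rem_small]; exists del => // u /rem_small /= rem_le i.
apply: le_trans (mx_entry_le_norm _ 0 i) _; move: rem_le.
by rewrite /grad_remainder opprD addrA (addrC x u).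
Qed.

Lemma second_difference_remainder x i j t c : t != 0 ->
  hess f x i j
    - t * ('d f (x + t *: e_ j + c *: e_ i) (e_ i) - 'd f (x + c *: e_ i) (e_ i)) / t ^+ 2
  = (grad_remainder x (c *: e_ i) 0 i - grad_remainder x (t *: e_ j + c *: e_ i) 0 i) / t.
Proof.
move=> t_neq0.
have linZ (s : R) k : 'd (grad f) x (s *: e_ k) = s *: 'd (grad f) x (e_ k).
  exact: linearZ.
rewrite /grad_remainder addrA linearD !linZ !mxE.
move: ('d (grad f) x (e_ j) 0 i) ('d (grad f) x (e_ i) 0 i) => Hj Hi.
(* The three values ['d f _ (e_ i)] are abstracted by [exact: alg]; generalizing
   them with [move:] or [set] instead is prohibitively slow. *)
have alg (D1 D2 D0 : R) : Hj - t * (D1 - D2) / t ^+ 2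
    = (D2 - D0 - c * Hi - (D1 - D0 - (t * Hj + c * Hi))) / t by field.
exact: alg.
Qed.

Lemma second_difference_cvg x i j :
  ((fun t => second_difference x (e_ i) (e_ j) t / t ^+ 2) @ 0^'+ --> hess f x i j)%classic.
Proof.
apply/cvgrPdist_le => eps eps_gt0.
have [del del_gt0 rem_small] := grad_remainder_small x (eps / 3) (divr_gt0 eps_gt0 (ltr0n R 3)).
near=> t.
have t_gt0 : 0 < t by near: t; exact: nbhs_right_gt.
have t2_lt : 2 * t < del.
  by rewrite mulrC -ltr_pdivlMr //; near: t; apply: nbhs_right_lt; rewrite divr_gt0.
have t_lt : t < del by apply: lt_trans t2_lt; rewrite ltr_pMl // ltr1n.
have [c] := second_difference_mvt x (e_ i) (e_ j) t (ltW t_gt0).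
rewrite in_itv /= => /andP[c_ge0 c_le_t] ->.
have u1_le : `|t *: e_ j + c *: e_ i| <= 2 * t.
  apply: le_trans (ler_normD _ _) _.
  apply: le_trans (lerD (normZ_delta_mx_le _ _ _ (ltW t_gt0)) (normZ_delta_mx_le _ _ _ c_ge0)) _.
  by rewrite mulr_natl mulr2n lerD2l.
have u2_le : `|c *: e_ i| <= t := le_trans (normZ_delta_mx_le _ _ _ c_ge0) c_le_t.
rewrite second_difference_remainder ?gt_eqF // normrM normfV (gtr0_norm t_gt0).
rewrite ler_pdivrMr // (le_trans (ler_normB _ _)) //.
have eps3_ge0 : 0 <= eps / 3 by rewrite divr_ge0 // ltW.
have -> : eps * t = eps / 3 * t + eps / 3 * (2 * t) by field.
apply: lerD.
  exact: le_trans (rem_small _ (le_lt_trans u2_le t_lt) i) (ler_wpM2l eps3_ge0 u2_le).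
exact: le_trans (rem_small _ (le_lt_trans u1_le t2_lt) i) (ler_wpM2l eps3_ge0 u1_le).
Unshelve. all: by end_near.
Qed.

Lemma hess_sym x : (hess f x)^T = hess f x.
Proof.
apply/matrixP => i j; rewrite mxE.
have := second_difference_cvg x j i; rewrite second_differenceC => cvg_ji.
exact: cvg_unique cvg_ji (second_difference_cvg x i j).
Qed.

End HessianSymmetry.

Theorem lemma7 (R : realType) (d : nat) (f : 'rV[R]_d -> R) (lam : R)
    (wt : 'rV[R]_d) (st : R) :
  twice_differentiable f -> 0 <= lam < 1 -> 0 <= st ->
  let g := grad f wt in
  let H := hess f wt in
  let q := qmodel f wt in
  let G1 := pospart (f wt - (1 - lam) * st) / (1 - lam + dot g g) in
  let G2 := pospart
     ((f wt - G1 * dot g g - (1 - lam) ^+ 2 * (st + G1)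
        + 2^-1 * G1 ^+ 2 * dot (mulMv H g) g)
      / (1 - lam + dot (g - G1 *: mulMv H g) (g - G1 *: mulMv H g))) in
  forall (wh : 'rV[R]_d) (sh : R), sp_argmin lam q wt st wh sh ->
  forall (w1 : 'rV[R]_d) (s1 : R), sp_argmin lam q wh sh w1 s1 ->
    w1 = wt - (G1 + G2) *: g + (G2 * G1) *: mulMv H g /\
    s1 = (1 - lam) * ((1 - lam) * (st + G1) + G2).
Proof.
move=> f_twice /andP[_ lam_lt1] st_ge0 g H q G1 G2 wh sh half_step w1 s1 full_step.
have H_sym : H^T = H := hess_sym f (fun w => (f_twice w).1) (fun w => (f_twice w).2) wt.
have grad_q w : grad q w = g + mulMv H (w - wt) := grad_quadratic (f wt) g wt H w H_sym.
have grad_q_wt : grad q wt = g by rewrite grad_q subrr mulMv0 addr0.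
have step1 : sp_step lam (q wt) (grad q wt) st = G1.
  by rewrite grad_q_wt /q /qmodel subrr mulMv0 !dot0r mulr0 !addr0.
have [wh_eq sh_eq] := sp_argmin_eq lam_lt1 st_ge0 half_step.
rewrite step1 grad_q_wt in wh_eq sh_eq.
have [w1_eq s1_eq] := sp_argmin_eq lam_lt1 half_step.1.1 full_step.
have wh_wt : wh - wt = - (G1 *: g) by rewrite wh_eq addrAC subrr add0r.
have step2 : sp_step lam (q wh) (grad q wh) sh = G2.
  rewrite grad_q /q /qmodel wh_wt mulMvN mulMvZ /sp_step pospart_div; last first.
    exact: sp_den_gt0.
  congr (pospart (_ / _)); rewrite sh_eq !(dotNl, dotNr, dotZl, dotZr); ring.
rewrite step2 grad_q wh_wt mulMvN mulMvZ in w1_eq s1_eq.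
split; last by rewrite s1_eq sh_eq.
by rewrite w1_eq wh_eq; apply/rowP => k; rewrite !mxE; ring.
Qed.
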